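(* Assume $\operatorname{rank}(X)=n$ and that there exists $\tilde A=[\tilde a_1\ \cdots\ \tilde a_s]\in\mathbb{R}^{n\times s}$ with pairwise distinct columns such that $\min_{i\in\mathbb{S}}|I_i(\tilde A)|\ge s\,\nu_n(X)$. Then for every $A\in\mathbb{R}^{n\times s}$, if $\phi(A)=\phi(\tilde A)$ then $\mathrm{set}(A)=\mathrm{set}(\tilde A)$.
   Context: Data: integers $n,s,N\ge1$ and a dataset $\varpi^N=((x_1,y_1),\ldots,(x_N,y_N))$ with $x_t\in\mathbb{R}^n$, $y_t\in\mathbb{R}$; $X=[x_1\ \cdots\ x_N]\in\mathbb{R}^{n\times N}$. Let $\mathbb{T}=\{1,\ldots,N\}$, $\mathbb{S}=\{1,\ldots,s\}$. For $A=[a_1\ \cdots\ a_s]\in\mathbb{R}^{n\times s}$, $\mathrm{set}(A)=\{a_1,\ldots,a_s\}$; $\sigma_A:\mathbb{T}\to\mathbb{S}$ is a switching signal satisfying $\sigma_A(t)\in\arg\min_{i\in\mathbb{S}}|y_t-x_t^\top a_i|$ for all $t$, selected uniquely by a fixed rule depending only on $A$ and the data (among all admissible choices, one maximizing $\min_{i}|I_i(A)|$, ties then broken by assigning the smallest admissible index). $I_i(A)=\{t\in\mathbb{T}:\sigma_A(t)=i\}$. $\phi(A)=\big(y_1-x_1^\top a_{\sigma_A(1)},\ldots,y_N-x_N^\top a_{\sigma_A(N)}\big)^\top$. Genericity index: for $X$ with $\operatorname{rank}(X)=n$, $\nu_n(X)$ is the smallest integer $m$ such that for every $\mathcal{S}\subset\mathbb{T}$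 with $|\mathcal{S}|=m$, the submatrix $X_{\mathcal{S}}$ of columns of $X$ indexed by $\mathcal{S}$ has rank $n$. *)

From HB Require Import structures.
From mathcomp Require Import all_boot all_order all_algebra.
From mathcomp Require Import reals.
Set Implicit Arguments. Unset Strict Implicit. Unset Printing Implicit Defensive.
Import Order.TTheory GRing.Theory Num.Theory.
Local Open Scope ring_scope.

Section SwitchedData.
Variables (R : realType) (n s N : nat).
Variables (X : 'M[R]_(n, N)) (y : 'rV[R]_N).

Definition res (A : 'M[R]_(n, s)) (t : 'I_N) (i : 'I_s) : R :=
  y 0 t - (X^T *m A) t i.

Definition admissible (A : 'M[R]_(n, s)) (sg : {ffun 'I_N -> 'I_s}) : bool :=
  [forall t, forall i, `|res A t (sg t)| <= `|res A t i| ].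

(* min_i |I_i| for a signal sg (s >= 1 assumed; each card is <= N) *)
Definition mincard (sg : {ffun 'I_N -> 'I_s}) : nat :=
  \big[minn/N]_(i : 'I_s) #|[set t | sg t == i]|.

Definition optimal (A : 'M[R]_(n, s)) (sg : {ffun 'I_N -> 'I_s}) : bool :=
  admissible A sg &&
  [forall sg' : {ffun 'I_N -> 'I_s}, admissible A sg' ==> (mincard sg' <= mincard sg)%N].

(* lexicographic code of a signal (sg(1) most significant digit, base s) *)
Definition code (sg : {ffun 'I_N -> 'I_s}) : nat :=
  (\sum_(t < N) (sg t : nat) * s ^ (N - t.+1))%N.

(* tie-break: among optimal signals, the lexicographically smallest one,
   i.e. smallest admissible index assigned first *)
Definition chosen (A : 'M[R]_(n, s)) (sg : {ffun 'I_N -> 'I_s}) : bool :=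
  optimal A sg &&
  [forall sg' : {ffun 'I_N -> 'I_s}, optimal A sg' ==> (code sg <= code sg')%N].

(* the switching signal sigma_A (always Some when s >= 1) *)
Definition sigma (A : 'M[R]_(n, s)) : option {ffun 'I_N -> 'I_s} :=
  [pick sg | chosen A sg].

Definition Iset (A : 'M[R]_(n, s)) (i : 'I_s) : {set 'I_N} :=
  [set t | if sigma A is Some sg then sg t == i else false].

Definition phi (A : 'M[R]_(n, s)) : 'rV[R]_N :=
  \row_t (if sigma A is Some sg then res A t (sg t) else 0).

End SwitchedData.

(* set(A) = {a_1, ..., a_s}, as a sequence compared up to membership *)
Definition colset (R : realType) (n s : nat) (A : 'M[R]_(n, s)) : seq 'cV[R]_n :=
  [seq col i A | i <- enum 'I_s].

Definition subcols (R : realType) (n N : nat) (X : 'M[R]_(n, N)) (S : {set 'I_N})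
  : 'M[R]_(n, #|S|) := colsub (@enum_val _ (mem S)) X.

Definition generic_at (R : realType) (n N : nat) (X : 'M[R]_(n, N)) (m : nat) : bool :=
  [forall S : {set 'I_N}, (#|S| == m) ==> (\rank (subcols X S) == n)].

Lemma generic_at_exists (R : realType) (n N : nat) (X : 'M[R]_(n, N)) :
  exists m, generic_at X m.
Proof.
exists N.+1; apply/forallP => S; apply/implyP => HS.
have := max_card (mem S); rewrite card_ord => H.
by move: HS; rewrite eqn_leq [(N.+1 <= _)%N]leqNgt ltnS H andbF.
Qed.

Definition nu (R : realType) (n N : nat) (X : 'M[R]_(n, N)) : nat :=
  ex_minn (generic_at_exists X).

From HB Require Import structures.
From mathcomp Require Import all_boot all_order all_algebra.
From mathcomp Require Import reals.
Set Implicit Arguments. Unset Strict Implicit. Unset Printing Implicit Defensive.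
Import Order.TTheory GRing.Theory Num.Theory.
Local Open Scope ring_scope.

(* Fix a mode i of At.  The s
   modes of A partition I_i(At), so by the pigeonhole principle some mode j of
   A is selected on at least nu(X) samples of I_i(At).  On every such sample t
   the residuals coincide, i.e. x_t^T (at_i - a_j) = 0; since any nu(X)
   columns of X have rank n, a vector orthogonal to all of them vanishes, so
   at_i = a_j.  The resulting map i |-> j is injective because the columns of
   At are distinct, hence a bijection of 'I_s, and the column sets coincide. *)

Lemma subset_of_card (T : finType) (S : {set T}) (m : nat) :
  (m <= #|S|)%N -> exists2 S' : {set T}, S' \subset S & #|S'| = m.
Proof.
elim: m => [|m IHm] le_mS; first by exists set0; rewrite ?sub0set ?cards0.
have [S' sub_S'S card_S'] := IHm (ltnW le_mS).
have : (0 < #|S :\: S'|)%N by rewrite cardsD (setIidPr sub_S'S) card_S' subn_gt0.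
case/card_gt0P => x; rewrite in_setD => /andP[xNS' xS].
exists (x |: S'); first by rewrite subUset sub1set xS.
by rewrite cardsU1 xNS' card_S'.
Qed.

Lemma pigeonhole (T K : finType) (p : T -> K) (I : {set T}) (m : nat) :
  (0 < #|K|)%N -> (#|K| * m <= #|I|)%N ->
  exists j : K, (m <= #|[set t in I | p t == j]|)%N.
Proof.
move=> K_gt0; case: m => [|m] le_I.
  by case/card_gt0P: K_gt0 => j _; exists j.
apply/existsP; apply: contraLR le_I => /existsPn small_fibers; rewrite -ltnNge.
have card_fibers : #|I| = (\sum_(j : K) #|[set t in I | p t == j]|)%N.
  rewrite -sum1_card (partition_big p xpredT) //=.
  by apply: eq_bigr => j _; rewrite -sum1_card; apply: eq_bigl => t; rewrite inE.
rewrite card_fibers (@leq_ltn_trans (#|K| * m)) ?ltn_pmul2l //.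
rewrite -sum_nat_const; apply: leq_sum => j _.
by have := small_fibers j; rewrite -ltnNge ltnS.
Qed.

Lemma orthogonal_generic_eq0 (R : realType) (n N m : nat) (X : 'M[R]_(n, N))
    (S : {set 'I_N}) (v : 'cV[R]_n) :
  generic_at X m -> (m <= #|S|)%N ->
  (forall t, t \in S -> (X^T *m v) t 0 = 0) -> v = 0.
Proof.
move=> X_generic le_mS v_orth.
have [S' sub_S'S card_S'] := subset_of_card le_mS.
have rank_S' : \rank (subcols X S') = n.
  by apply/eqP; move/forallP/(_ S')/implyP: X_generic; apply; apply/eqP.
have : v^T *m subcols X S' = 0.
  rewrite /subcols mulmx_colsub; apply/matrixP => i k.
  rewrite ord1 [RHS]mxE [LHS]mxE -[X]trmxK -trmx_mul [LHS]mxE.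
  by apply: v_orth; apply: (subsetP sub_S'S); apply: enum_valP.
move/eqP; rewrite mulmx_free_eq0 /row_free ?rank_S' //.
by move/eqP/(congr1 trmx); rewrite trmxK trmx0.
Qed.

Lemma nu_generic (R : realType) (n N : nat) (X : 'M[R]_(n, N)) :
  generic_at X (nu X).
Proof. by rewrite /nu; case: ex_minnP. Qed.

Section SwitchingSignal.
Variables (R : realType) (n s N : nat) (X : 'M[R]_(n, N)) (y : 'rV[R]_N).
Hypothesis s_gt0 : (0 < s)%N.

Lemma admissible_exists (A : 'M[R]_(n, s)) : exists sg, admissible X y A sg.
Proof.
pose i0 := Ordinal s_gt0.
exists [ffun t => [arg min_(i < i0) `|res X y A t i|]%O].
apply/forallP => t; apply/forallP => i; rewrite ffunE.
by case: arg_minP => // j _; apply.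
Qed.

Lemma sigma_defined (A : 'M[R]_(n, s)) : exists sg, sigma X y A = Some sg.
Proof.
have [sg0 adm0] := admissible_exists A.
have [sg1 adm1 max1] := arg_maxnP (fun sg => mincard sg) adm0.
have opt1 : optimal X y A sg1.
  by rewrite /optimal adm1; apply/forallP => sg; apply/implyP => /max1.
have [sg2 opt2 min2] := arg_minnP (fun sg => code sg) opt1.
rewrite /sigma; case: pickP => [sg _ | no_chosen]; first by exists sg.
have /negbT := no_chosen sg2; rewrite /chosen opt2 /=.
by move/forallPn => [sg]; rewrite negb_imply => /andP[/min2 ->].
Qed.

Lemma phiE (A : 'M[R]_(n, s)) sg t :
  sigma X y A = Some sg -> phi X y A 0 t = res X y A t (sg t).
Proof. by move=> sigma_A; rewrite /phi sigma_A mxE. Qed.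

Lemma res_sub (A B : 'M[R]_(n, s)) t i j :
  res X y A t i - res X y B t j = (X^T *m (col j B - col i A)) t 0.
Proof.
rewrite /res mulmxBr !colE !mulmxA -!colE !mxE.
by rewrite opprB [LHS]addrC addrA subrK.
Qed.

Lemma mode_matched (A At : 'M[R]_(n, s)) (i : 'I_s) :
  phi X y A = phi X y At -> (s * nu X <= #|Iset X y At i|)%N ->
  exists j, col i At = col j A.
Proof.
move=> phi_eq large_i.
have [sgt sigma_At] := sigma_defined At.
have [sgA sigma_A] := sigma_defined A.
have [j large_ij] :
    exists j : 'I_s, (nu X <= #|[set t in Iset X y At i | sgA t == j]|)%N.
  by apply: pigeonhole; rewrite card_ord.
exists j; apply/eqP; rewrite -subr_eq0; apply/eqP.
apply: (orthogonal_generic_eq0 (nu_generic X) large_ij) => t.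
rewrite !inE sigma_At => /andP[/eqP sgt_t /eqP sgA_t].
rewrite -res_sub -sgA_t -sgt_t -(phiE t sigma_A) -(phiE t sigma_At).
by rewrite phi_eq subrr.
Qed.

End SwitchingSignal.

(* A column matching from B into A is injective when the columns of B are
   distinct, hence a bijection of 'I_s, so the two column sets coincide. *)
Lemma colset_eq_of_matching (R : realType) (n s : nat) (A B : 'M[R]_(n, s)) :
  (forall i j, col i B = col j B -> i = j) ->
  (forall i, exists j, col i B = col j A) -> colset A =i colset B.
Proof.
move=> B_distinct matched.
have [f col_f] := fin_all_exists matched.
have f_inj : injective f.
  by move=> i i' f_eq; apply: B_distinct; rewrite !col_f f_eq.
move=> c; apply/mapP/mapP => -[k _ ->].
  have /codomP[i ->] := inj_card_onto f_inj (leqnn _) k.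
  by exists i; rewrite ?mem_enum ?col_f.
by exists (f k); rewrite ?mem_enum ?col_f.
Qed.

(* Lemma 4. *)
Theorem lemma4 (R : realType) (n s N : nat) (X : 'M[R]_(n, N)) (y : 'rV[R]_N) :
  (0 < n)%N -> (0 < s)%N -> (0 < N)%N ->
  \rank X = n ->
  forall At : 'M[R]_(n, s),
    (forall i j : 'I_s, col i At = col j At -> i = j) ->
    (forall i : 'I_s, (s * nu X <= #|Iset X y At i|)%N) ->
    forall A : 'M[R]_(n, s),
      phi X y A = phi X y At -> colset A =i colset At.
Proof.
move=> _ s_gt0 _ _ At At_distinct large_modes A phi_eq.
apply: colset_eq_of_matching At_distinct _ => i.
exact: (mode_matched s_gt0 phi_eq (large_modes i)).
Qed.
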